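(* Let $O$ be a split Cayley algebra over a field $F$ of characteristic $\neq2$, let $\mathfrak{H}$ be any collection of 4-dimensional associative subalgebras of $O$ and $\mathfrak{B}=\{\operatorname{im}(H):H\in\mathfrak{H}\}$. Then either some 2-dimensional subspace of $\operatorname{im}(O)$ of type M is contained in no element of $\mathfrak{B}$, or some 2-dimensional subspace of $\operatorname{im}(O)$ of type U is contained in more than one element of $\mathfrak{B}$. In particular no such $\mathfrak{B}$ is a $2$-$(7,3,1)$ subspace design on $\operatorname{im}(O)$.
   Context: Cayley algebra: $D_\gamma(D_\beta(D_\alpha(F)))$, $\alpha,\beta,\gamma\in F^\times$, with $D_\gamma(A)=A\oplus A$ (elements $a+ib$), $(a+ib)(c+id)=(ac+\gamma db^* )+i(a^*d+cb)$, $(a+ib)^*=a^*-ib$, starting from $F$ with identity involution; $\operatorname{im}(O)=\{a:a^*=-a\}$. Split: $O$ contains zero divisors. Nilpotent line: 1-dimensional subspace of nilpotent elements. A 2-dimensional $U\subseteq\operatorname{im}(O)$ is of type M if it contains exactly two nilpotent lines, and of type U if it contains exactly one nilpotent line $Fu$ and $uv\in Fu$ for all $v\in U$. A $2$-$(7,3,1)$ subspace design: 3-dimensional subspaces such that each 2-dimensional subspace lies in exactly one. *)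

From HB Require Import structures.
From mathcomp Require Import all_boot all_order all_algebra.
Set Implicit Arguments. Unset Strict Implicit. Unset Printing Implicit Defensive.
Import Order.TTheory GRing.Theory Num.Theory.
Local Open Scope ring_scope.

Section Cayley.
Variable F : fieldType.

(* One Cayley-Dickson doubling step D_g(A) = A (+) A, element (a,b) = a + i b:
   (a+ib)(c+id) = (ac + g d b^* ) + i(a^* d + c b),   (a+ib)^* = a^* - i b. *)
Definition dmul (V : lmodType F) (mul : V -> V -> V) (conj : V -> V) (g : F)
  (x y : V * V) : V * V :=
  (mul x.1 y.1 + g *: mul y.2 (conj x.2), mul (conj x.1) y.2 + mul y.1 x.2).
Definition dconj (V : lmodType F) (conj : V -> V) (x : V * V) : V * V :=
  (conj x.1, - x.2).

Definition Alg1 := (F^o)%type.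
Definition Alg2 := (Alg1 * Alg1)%type.
Definition Alg4 := (Alg2 * Alg2)%type.
(* carrier of the Cayley algebra D_gamma(D_beta(D_alpha(F))) *)
Definition Oct := (Alg4 * Alg4)%type.

Definition conj1 : Alg1 -> Alg1 := id.
Definition conj2 : Alg2 -> Alg2 := dconj conj1.
Definition conj4 : Alg4 -> Alg4 := dconj conj2.
Definition oconj : Oct -> Oct := dconj conj4.

Definition mul1 : Alg1 -> Alg1 -> Alg1 := fun x y => (x : F) * y.
Definition mul2 (a : F) : Alg2 -> Alg2 -> Alg2 := dmul mul1 conj1 a.
Definition mul4 (a b : F) : Alg4 -> Alg4 -> Alg4 := dmul (mul2 a) conj2 b.
Definition omul (a b g : F) : Oct -> Oct -> Oct := dmul (mul4 a b) conj4 g.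

Definition oone : Oct := (((1 : F^o, 0 : F^o), (0 : F^o, 0 : F^o)), 0).

Definition inIm (x : Oct) : Prop := oconj x = - x.

(* powers x^(n+1) := x (x (... x)) ; nilpotent: some power vanishes *)
Definition nilpotent (a b g : F) (x : Oct) : Prop :=
  exists n : nat, iter n (omul a b g x) x = 0.

Definition nil_line (a b g : F) (L : {vspace Oct}) : Prop :=
  \dim L = 1%N /\ forall x, x \in L -> nilpotent a b g x.

Definition sub_im (U : {vspace Oct}) : Prop := forall x, x \in U -> inIm x.

Definition typeM (a b g : F) (U : {vspace Oct}) : Prop :=
  [/\ \dim U = 2%N, sub_im U &
   exists L1 L2, [/\ L1 != L2, nil_line a b g L1 /\ (L1 <= U)%VS,
     nil_line a b g L2 /\ (L2 <= U)%VS &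
     forall L, nil_line a b g L -> (L <= U)%VS -> L = L1 \/ L = L2]].

Definition typeU (a b g : F) (U : {vspace Oct}) : Prop :=
  [/\ \dim U = 2%N, sub_im U &
   exists u, [/\ nil_line a b g <[u]>%VS, (<[u]> <= U)%VS,
     (forall L, nil_line a b g L -> (L <= U)%VS -> L = <[u]>%VS) &
     forall v, v \in U -> omul a b g u v \in <[u]>%VS]].

Definition assoc_subalg4 (a b g : F) (H : {vspace Oct}) : Prop :=
  [/\ \dim H = 4%N, oone \in H,
   (forall x y, x \in H -> y \in H -> omul a b g x y \in H) &
   (forall x y z, x \in H -> y \in H -> z \in H ->
      omul a b g (omul a b g x y) z = omul a b g x (omul a b g y z))].

Definition is_im_of (H B : {vspace Oct}) : Prop :=
  forall x, x \in B <-> (x \in H /\ inIm x).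

Definition inB (frakH : {vspace Oct} -> Prop) (B : {vspace Oct}) : Prop :=
  exists2 H, frakH H & is_im_of H B.

Definition design_2_7_3_1 (frakB : {vspace Oct} -> Prop) : Prop :=
  (forall B, frakB B -> \dim B = 3%N /\ sub_im B) /\
  (forall U : {vspace Oct}, \dim U = 2%N -> sub_im U ->
     exists B, [/\ frakB B, (U <= B)%VS &
       forall B', frakB B' -> (U <= B')%VS -> B' = B]).

End Cayley.

(* O = D_g(D_b(D_a(F))) is handled in explicit coordinates: the product, the
   conjugation and the norm form nrm are polynomial in the eight coordinates,
   so the classical identities (bilinearity, the left alternative law,
   nrm (p q) = nrm p * nrm q, the quadratic equation p^2 = 2 re(p) p - nrm(p))
   are checked once and for all by ring; bil is the polar form of nrm.  Then:
   1. im(O) consists of the elements with re = 0, nilpotent imaginary elements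
      are the isotropic ones, and since O is split it contains a hyperbolic
      pair (x, y): imaginary, isotropic, with bil x y <> 0.
   2. <x, y> is a plane of type M, and with the commutator w = xy - yx the
      plane <x, w> is of type U.
   3. S = span(1, x, y, xy) is 4-dimensional and stable under left
      multiplication by y but not by x; this produces a second partner y' of x
      with x y' = x y and y' - y outside S.
   4. If <x, y> and <x, y'> lie in members im(H1), im(H2) of the family, then
      H1 = S (by dimension), hence H1 <> H2, and both contain <x, w>; otherwise
      one of the two type-M planes lies in no member. *)
From HB Require Import structures.
From mathcomp Require Import all_boot all_order all_algebra.
From mathcomp Require Import ring.
From Stdlib Require Import Classical.
Import GRing.Theory.
Local Open Scope ring_scope.

Section Octonions.
Set Implicit Arguments. Unset Strict Implicit.
Variables (F : fieldType) (a b g : F).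

(* Coordinates: Oct F is definitionally ((F*F)*(F*F))*((F*F)*(F*F)); the
   operations below are the Cayley-Dickson formulas written on plain pairs, so
   that after unfolding only field operations remain. *)
Definition P2 := (F * F)%type.
Definition P4 := (P2 * P2)%type.
Definition P8 := (P4 * P4)%type.

Definition addc2 (x y : P2) : P2 := (x.1 + y.1, x.2 + y.2).
Definition sclc2 (k : F) (x : P2) : P2 := (k * x.1, k * x.2).
Definition oppc2 (x : P2) : P2 := (- x.1, - x.2).
Definition cnjc2 (x : P2) : P2 := (x.1, - x.2).
Definition mulc2 (x y : P2) : P2 :=
  (x.1 * y.1 + a * (y.2 * x.2), x.1 * y.2 + y.1 * x.2).

Definition addc4 (x y : P4) : P4 := (addc2 x.1 y.1, addc2 x.2 y.2).
Definition sclc4 (k : F) (x : P4) : P4 := (sclc2 k x.1, sclc2 k x.2).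
Definition oppc4 (x : P4) : P4 := (oppc2 x.1, oppc2 x.2).
Definition cnjc4 (x : P4) : P4 := (cnjc2 x.1, oppc2 x.2).
Definition mulc4 (x y : P4) : P4 :=
  (addc2 (mulc2 x.1 y.1) (sclc2 b (mulc2 y.2 (cnjc2 x.2))),
   addc2 (mulc2 (cnjc2 x.1) y.2) (mulc2 y.1 x.2)).

Definition addc8 (x y : P8) : P8 := (addc4 x.1 y.1, addc4 x.2 y.2).
Definition sclc8 (k : F) (x : P8) : P8 := (sclc4 k x.1, sclc4 k x.2).
Definition oppc8 (x : P8) : P8 := (oppc4 x.1, oppc4 x.2).
Definition cnjc8 (x : P8) : P8 := (cnjc4 x.1, oppc4 x.2).
Definition mulc8 (x y : P8) : P8 :=
  (addc4 (mulc4 x.1 y.1) (sclc4 g (mulc4 y.2 (cnjc4 x.2))),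
   addc4 (mulc4 (cnjc4 x.1) y.2) (mulc4 y.1 x.2)).
Definition nrmc8 (x : P8) : F :=
  x.1.1.1 ^+ 2 - a * x.1.1.2 ^+ 2 - b * x.1.2.1 ^+ 2 + a * b * x.1.2.2 ^+ 2
  - g * x.2.1.1 ^+ 2 + a * g * x.2.1.2 ^+ 2 + b * g * x.2.2.1 ^+ 2
  - a * b * g * x.2.2.2 ^+ 2.

Definition toP (p : Oct F) : P8 := p.
Definition ofP (x : P8) : Oct F := x.

Local Notation mul := (omul a b g).
Local Notation o1 := (oone F).

Lemma toP_inj (p q : Oct F) : toP p = toP q -> p = q. Proof. by []. Qed.
Lemma toP_ofP (x : P8) : toP (ofP x) = x. Proof. by []. Qed.
Lemma toP_mul (p q : Oct F) : toP (mul p q) = mulc8 (toP p) (toP q). Proof. by []. Qed.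
Lemma toP_add (p q : Oct F) : toP (p + q) = addc8 (toP p) (toP q). Proof. by []. Qed.
Lemma toP_scale k (p : Oct F) : toP (k *: p) = sclc8 k (toP p). Proof. by []. Qed.
Lemma toP_opp (p : Oct F) : toP (- p) = oppc8 (toP p). Proof. by []. Qed.
Lemma toP_conj (p : Oct F) : toP (oconj p) = cnjc8 (toP p). Proof. by []. Qed.
Lemma toP_one : toP o1 = ((1, 0), (0, 0), ((0, 0), (0, 0))). Proof. by []. Qed.
Lemma toP0 : toP 0 = ((0, 0), (0, 0), ((0, 0), (0, 0))). Proof. by []. Qed.

Definition re (p : Oct F) : F := (toP p).1.1.1.
Definition nrm (p : Oct F) : F := nrmc8 (toP p).
Definition bil (p q : Oct F) : F := nrm (p + q) - nrm p - nrm q.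

Ltac oct_expand :=
  rewrite /bil /nrm /re ?(toP_mul, toP_add, toP_scale, toP_opp, toP_conj,
                          toP_one, toP0, toP_ofP);
  repeat match goal with
    p : Oct F |- _ => destruct p as [[[? ?] [? ?]] [[? ?] [? ?]]] end;
  cbv beta iota zeta delta [mulc8 mulc4 mulc2 addc8 addc4 addc2 sclc8 sclc4
    sclc2 oppc8 oppc4 oppc2 cnjc8 cnjc4 cnjc2 nrmc8 toP ofP fst snd].
Ltac oct_ring := apply: toP_inj; oct_expand; do ! congr (_, _); ring.
Ltac scal_ring := oct_expand; ring.

Lemma omulDr (p q r : Oct F) : mul p (q + r) = mul p q + mul p r. Proof. oct_ring. Qed.
Lemma omulDl (p q r : Oct F) : mul (q + r) p = mul q p + mul r p. Proof. oct_ring. Qed.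
Lemma omulZr k (p q : Oct F) : mul p (k *: q) = k *: mul p q. Proof. oct_ring. Qed.
Lemma omulZl k (p q : Oct F) : mul (k *: p) q = k *: mul p q. Proof. oct_ring. Qed.
Lemma omulNr (p q : Oct F) : mul p (- q) = - mul p q. Proof. oct_ring. Qed.
Lemma omul1l (p : Oct F) : mul o1 p = p. Proof. oct_ring. Qed.
Lemma omul1r (p : Oct F) : mul p o1 = p. Proof. oct_ring. Qed.
Lemma omul0l (p : Oct F) : mul 0 p = 0. Proof. oct_ring. Qed.
Lemma omul_alt (p q : Oct F) : mul p (mul p q) = mul (mul p p) q. Proof. oct_ring. Qed.
Lemma omul_alt_lin (p r q : Oct F) :
  mul p (mul r q) + mul r (mul p q) = mul (mul p r + mul r p) q.
Proof. oct_ring. Qed.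
Lemma omul_sq (p : Oct F) : mul p p = (2 * re p) *: p - nrm p *: o1. Proof. oct_ring. Qed.
Lemma omul_anticomm (p q : Oct F) :
  mul p q + mul q p = (2 * re p) *: q + (2 * re q) *: p - bil p q *: o1.
Proof. oct_ring. Qed.
Lemma oconjE (p : Oct F) : oconj p = - p + (2 * re p) *: o1. Proof. oct_ring. Qed.

Lemma re_omul (p q : Oct F) : 2 * re (mul p q) = 4 * re p * re q - bil p q. Proof. scal_ring. Qed.
Lemma bil_omulr (p q : Oct F) : bil p (mul p q) = nrm p * (2 * re q). Proof. scal_ring. Qed.
Lemma bil_omull (p q : Oct F) : bil (mul p q) q = nrm q * (2 * re p). Proof. scal_ring. Qed.
Lemma nrm_omul (p q : Oct F) : nrm (mul p q) = nrm p * nrm q. Proof. scal_ring. Qed.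
Lemma nrmD (p q : Oct F) : nrm (p + q) = nrm p + nrm q + bil p q. Proof. rewrite /bil; ring. Qed.
Lemma nrmZ k (p : Oct F) : nrm (k *: p) = k ^+ 2 * nrm p. Proof. scal_ring. Qed.
Lemma nrm1 : nrm o1 = 1. Proof. scal_ring. Qed.
Lemma nrm0 : nrm 0 = 0. Proof. scal_ring. Qed.
Lemma bilC (p q : Oct F) : bil p q = bil q p. Proof. scal_ring. Qed.
Lemma bilDr (p q r : Oct F) : bil p (q + r) = bil p q + bil p r. Proof. scal_ring. Qed.
Lemma bilZr k (p q : Oct F) : bil p (k *: q) = k * bil p q. Proof. scal_ring. Qed.
Lemma bil_self (p : Oct F) : bil p p = 2 * nrm p. Proof. scal_ring. Qed.
Lemma bilNr (p q : Oct F) : bil p (- q) = - bil p q. Proof. scal_ring. Qed.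
Lemma bil1r (p : Oct F) : bil p o1 = 2 * re p. Proof. scal_ring. Qed.
Lemma bil0r (p : Oct F) : bil p 0 = 0. Proof. scal_ring. Qed.
Lemma reD (p q : Oct F) : re (p + q) = re p + re q. Proof. scal_ring. Qed.
Lemma reZ k (p : Oct F) : re (k *: p) = k * re p. Proof. scal_ring. Qed.
Lemma reN (p : Oct F) : re (- p) = - re p. Proof. scal_ring. Qed.
Lemma re1 : re o1 = 1. Proof. scal_ring. Qed.
Lemma re0 : re 0 = 0. Proof. scal_ring. Qed.
Lemma re_conj (p : Oct F) : re (oconj p) = re p. Proof. scal_ring. Qed.

Hypotheses (ha : a != 0) (hb : b != 0) (hg : g != 0) (h2 : (2 : F) != 0).

Lemma inImE (p : Oct F) : inIm p <-> re p = 0.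
Proof.
split=> [|re0p]; last by rewrite /inIm oconjE re0p mulr0 scale0r addr0.
move=> /(congr1 re); rewrite re_conj reN => /eqP.
by rewrite -subr_eq0 opprK -mulr2n -mulr_natl mulf_eq0 (negbTE h2) => /eqP.
Qed.

Lemma omul_iso_sq (p : Oct F) : re p = 0 -> nrm p = 0 -> mul p p = 0.
Proof. by move=> rp np; rewrite omul_sq rp np mulr0 !scale0r subrr. Qed.

(* The norm is multiplicative, so nilpotent elements are isotropic ... *)
Lemma nilpotent_nrm (p : Oct F) : nilpotent a b g p -> nrm p = 0.
Proof.
case=> n; have pow : nrm (iter n (mul p) p) = nrm p ^+ n.+1.
  by elim: n => [|n IH]; [rewrite expr1 | rewrite iterS nrm_omul IH [RHS]exprS].
by move=> pn0; move: pow; rewrite pn0 nrm0 => /esym/eqP; rewrite expf_eq0 => /eqP.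
Qed.

Lemma iso_nilpotent (p : Oct F) : re p = 0 -> nrm p = 0 -> nilpotent a b g p.
Proof. by move=> rp np; exists 1%N; rewrite /= omul_iso_sq. Qed.

(* The polar form of the norm is nondegenerate: pairing with the eight unit
   vectors recovers each coordinate up to a nonzero factor. *)
Lemma bil_nondegenerate (x : Oct F) : (forall v, bil x v = 0) -> x = 0.
Proof.
move=> hx; have coord E c k : bil x (ofP E) = k * c -> k != 0 -> c = 0.
  by move=> e k0; move/eqP: (hx (ofP E)); rewrite e mulf_eq0 (negbTE k0) => /eqP.
apply: toP_inj; move: x coord {hx} => [[[p1 p2] [p3 p4]] [[p5 p6] [p7 p8]]] coord.
have nz2 (k : F) : k != 0 -> 2 * k != 0 by move=> k0; rewrite mulf_neq0.
have -> : p1 = 0.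
  by apply: (coord ((1, 0), (0, 0), ((0, 0), (0, 0))) _ 2) => //; scal_ring.
have -> : p2 = 0.
  apply: (coord ((0, 1), (0, 0), ((0, 0), (0, 0))) _ (- (2 * a))); first by scal_ring.
  by rewrite oppr_eq0 nz2.
have -> : p3 = 0.
  apply: (coord ((0, 0), (1, 0), ((0, 0), (0, 0))) _ (- (2 * b))); first by scal_ring.
  by rewrite oppr_eq0 nz2.
have -> : p4 = 0.
  apply: (coord ((0, 0), (0, 1), ((0, 0), (0, 0))) _ (2 * (a * b))); first by scal_ring.
  by rewrite nz2 ?mulf_neq0.
have -> : p5 = 0.
  apply: (coord ((0, 0), (0, 0), ((1, 0), (0, 0))) _ (- (2 * g))); first by scal_ring.
  by rewrite oppr_eq0 nz2.
have -> : p6 = 0.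
  apply: (coord ((0, 0), (0, 0), ((0, 1), (0, 0))) _ (2 * (a * g))); first by scal_ring.
  by rewrite nz2 ?mulf_neq0.
have -> : p7 = 0.
  apply: (coord ((0, 0), (0, 0), ((0, 0), (1, 0))) _ (2 * (b * g))); first by scal_ring.
  by rewrite nz2 ?mulf_neq0.
have -> : p8 = 0.
  apply: (coord ((0, 0), (0, 0), ((0, 0), (0, 1))) _ (- (2 * (a * b * g))));
    first by scal_ring.
  by rewrite oppr_eq0 nz2 ?mulf_neq0.
by [].
Qed.

(* Every nonzero imaginary element pairs nontrivially with some imaginary one:
   correct a witness of nondegeneracy by a multiple of 1, which is orthogonal
   to the imaginary part. *)
Lemma exists_im_partner (x : Oct F) :
  x != 0 -> re x = 0 -> exists v, re v = 0 /\ bil x v != 0.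
Proof.
move=> x0 rx; have [v bxv] : exists v, bil x v != 0.
  apply: NNPP => nv; apply/negP: x0; apply/negPn/eqP/bil_nondegenerate => v.
  by apply/eqP/negPn/negP => bxv; apply: nv; exists v.
exists (v - re v *: o1); split; first by rewrite reD reN reZ re1 mulr1 subrr.
by rewrite bilDr -scaleNr bilZr bil1r rx mulr0 mulr0 addr0.
Qed.

Lemma exists_im_orthogonal (p : Oct F) :
  exists y, [/\ y != 0, re y = 0 & bil p y = 0].
Proof.
pose e2 := ofP ((0, 1), (0, 0), ((0, 0), (0, 0))).
have e2_0 : e2 != 0 by apply/eqP => /(congr1 (fun q => (toP q).1.1.2)); apply/eqP/oner_neq0.
case: (eqVneq (toP p).1.1.2 0) => [p2 | p2].
  exists e2; split=> //.
  have -> : bil p e2 = - (2 * a) * (toP p).1.1.2 by rewrite /e2; scal_ring.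
  by rewrite p2 mulr0.
exists (ofP ((0, b * (toP p).1.2.1), (- (a * (toP p).1.1.2), 0), ((0, 0), (0, 0)))).
split; [| by scal_ring | by scal_ring].
apply/eqP => /(congr1 (fun q => (toP q).1.2.1)) /= /eqP.
by rewrite oppr_eq0 mulf_eq0 (negbTE ha) (negbTE p2).
Qed.

(* In a split algebra there is a nonzero imaginary isotropic element: starting
   from an isotropic p with re p != 0, multiply p by an imaginary element
   orthogonal to it. *)
Lemma exists_im_isotropic (p : Oct F) :
  p != 0 -> nrm p = 0 -> exists x, [/\ x != 0, re x = 0 & nrm x = 0].
Proof.
move=> p0 np; have [rp | rp] := eqVneq (re p) 0; first by exists p.
have [y [y0 ry bpy]] := exists_im_orthogonal p.
have [ny | ny] := eqVneq (nrm y) 0; first by exists y.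
exists (mul p y); split; last by rewrite nrm_omul np mul0r.
- (* if p y = 0 then (p - re p) y = - re p y, and taking norms gives
     - re(p)^2 nrm y = re(p)^2 nrm y, i.e. 2 re(p)^2 nrm y = 0 *)
  apply/eqP => py0.
  have e : mul (p - re p *: o1) y = - re p *: y.
    by rewrite -scaleNr omulDl py0 omulZl omul1l add0r.
  have np' : nrm (p - re p *: o1) = - re p ^+ 2.
    by rewrite -scaleNr nrmD np nrmZ nrm1 bilZr bil1r; ring.
  move/(congr1 nrm): e; rewrite nrm_omul nrmZ np' sqrrN => /eqP.
  rewrite -subr_eq0 mulNr -opprD oppr_eq0 -mulr2n -mulr_natl.
  by apply/negP; rewrite !mulf_neq0 // expf_neq0.
- have := re_omul p y; rewrite ry bpy mulr0 subr0.
  by move/eqP; rewrite mulf_eq0 (negbTE h2) => /eqP.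
Qed.

Definition hyperbolic_pair (x y : Oct F) : Prop :=
  [/\ re x = 0, re y = 0, nrm x = 0, nrm y = 0 & bil x y != 0].

Lemma exists_hyperbolic_pair :
  (exists p q : Oct F, [/\ p != 0, q != 0 & mul p q = 0]) ->
  exists x y, hyperbolic_pair x y.
Proof.
case=> p [q [p0 q0 pq]].
have [p' [p'0 np']] : exists p', p' != 0 /\ nrm p' = 0.
  move/eqP: (nrm_omul p q); rewrite pq nrm0 eq_sym mulf_eq0.
  by case/orP => /eqP ?; [exists p | exists q].
have [x [x0 rx nx]] := exists_im_isotropic p'0 np'.
have [v [rv bxv]] := exists_im_partner x0 rx.
pose y := v - (nrm v / bil x v) *: x.
exists x, y; split=> //.
- by rewrite /y reD reN reZ rx mulr0 oppr0 addr0.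
- rewrite /y -scaleNr nrmD nrmZ nx mulr0 addr0 bilZr (bilC v x); field.
  exact: bxv.
- by rewrite /y bilDr -scaleNr bilZr bil_self nx !mulr0 addr0.
Qed.

Lemma omul_iso_left (p r : Oct F) : re p = 0 -> nrm p = 0 -> mul p (mul p r) = 0.
Proof. by move=> rp np; rewrite omul_alt omul_iso_sq // omul0l. Qed.

Lemma span_map_sub (V W : vectType F) (f : V -> W) (s : seq V) (U : {vspace W}) :
  (forall p q, f (p + q) = f p + f q) -> (forall k p, f (k *: p) = k *: f p) ->
  {in s, forall v, f v \in U} -> forall z, z \in <<s>>%VS -> f z \in U.
Proof.
move=> fD fZ; elim: s => [|v s IH] fs z.
  by rewrite span_nil memv0 => /eqP ->; rewrite -(scale0r 0) fZ scale0r mem0v.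
rewrite span_cons => /memv_addP [z1 /vlineP [k ->] [z2 z2s ->]].
rewrite fD fZ memvD ?memvZ ?(fs v) ?mem_head //; apply: (IH _ _ z2s) => u us.
by apply: fs; rewrite in_cons us orbT.
Qed.

Lemma span_form_vanish (f : Oct F -> F) (s : seq (Oct F)) (z : Oct F) :
  (forall p q, f (p + q) = f p + f q) -> (forall k p, f (k *: p) = k * f p) ->
  {in s, forall v, f v = 0} -> z \in <<s>>%VS -> f z = 0.
Proof.
move=> fD fZ fs zs; apply/eqP.
have : (f z : F^o) \in (0 : {vspace F^o})%VS.
  by apply: (@span_map_sub _ F^o f s) => // v vs; rewrite fs ?mem0v.
by rewrite memv0.
Qed.

Lemma span2P (u v z : Oct F) :
  reflect (exists k1 k2, z = k1 *: u + k2 *: v) (z \in <<[:: u; v]>>%VS).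
Proof.
rewrite span_cons span_seq1; apply: (iffP memv_addP).
- by case=> _ /vlineP [k1 ->] [_ /vlineP [k2 ->] ->]; exists k1, k2.
- by case=> k1 [k2 ->]; exists (k1 *: u); rewrite ?memvZ ?memv_line //; exists (k2 *: v);
    rewrite ?memvZ ?memv_line.
Qed.

Lemma span2_sub (u v : Oct F) (U : {vspace Oct F}) :
  u \in U -> v \in U -> (<<[:: u; v]>> <= U)%VS.
Proof. by move=> uU vU; apply/span_subvP => r; rewrite !inE => /orP [] /eqP ->. Qed.

Lemma span2_mem (u v : Oct F) : u \in <<[:: u; v]>>%VS /\ v \in <<[:: u; v]>>%VS.
Proof. by split; apply: memv_span; rewrite !inE eqxx ?orbT. Qed.

Lemma sub_im_span2 (u v : Oct F) : re u = 0 -> re v = 0 -> sub_im <<[:: u; v]>>%VS.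
Proof.
move=> ru rv z /span2P [k1 [k2 ->]]; apply/inImE.
by rewrite reD !reZ ru rv !mulr0 addr0.
Qed.

Lemma dim_span2 (u v : Oct F) : v != 0 -> u \notin <[v]>%VS -> \dim <<[:: u; v]>> = 2%N.
Proof. by move=> v0 uv; apply/eqP; rewrite -/(free _) free_cons seq1_free span_seq1 uv v0. Qed.

Lemma vline_scale k (v : Oct F) : k != 0 -> <[k *: v]>%VS = <[v]>%VS.
Proof.
move=> k0; apply/eqP; rewrite eqEdim !dim_vline scaler_eq0 (negbTE k0) leqnn andbT.
by rewrite -memvE memvZ ?memv_line.
Qed.

Lemma nil_lineP (L : {vspace Oct F}) :
  nil_line a b g L -> exists z, [/\ z != 0, L = <[z]>%VS & nrm z = 0].
Proof.
case=> dL nL; have zL := memv_pick L.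
have z0 : vpick L != 0 by rewrite vpick0 -dimv_eq0 dL.
exists (vpick L); split=> //; last exact/nilpotent_nrm/nL.
by apply/eqP; rewrite eq_sym eqEdim -memvE zL dL dim_vline z0.
Qed.

Lemma nil_line_iso (u : Oct F) :
  u != 0 -> re u = 0 -> nrm u = 0 -> nil_line a b g <[u]>%VS.
Proof.
move=> u0 ru nu; split; first by rewrite dim_vline u0.
by move=> z /vlineP [k ->]; apply: iso_nilpotent; rewrite ?reZ ?nrmZ ?ru ?nu mulr0.
Qed.

Lemma typeM_hyperbolic (u v : Oct F) : hyperbolic_pair u v -> typeM a b g <<[:: u; v]>>%VS.
Proof.
case=> ru rv nu nv buv.
have u0 : u != 0 by apply: contraNneq buv => ->; rewrite bilC bil0r.
have v0 : v != 0 by apply: contraNneq buv => ->; rewrite bil0r.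
have uv : u \notin <[v]>%VS.
  by apply/vlineP => -[k uk]; move: buv; rewrite uk bilC bilZr bil_self nv !mulr0 eqxx.
have [uU vU] := span2_mem u v.
split; [exact: dim_span2 | exact: sub_im_span2 |].
exists <[u]>%VS, <[v]>%VS; split; rewrite -?memvE.
- by apply: contraNneq uv => <-; rewrite memv_line.
- by split=> //; apply: nil_line_iso.
- by split=> //; apply: nil_line_iso.
move=> L /nil_lineP [z [z0 -> nz]] /[dup] sL; rewrite -memvE => /span2P [k1 [k2 zE]].
move: nz; rewrite zE nrmD !nrmZ nu nv bilZr bilC bilZr !mulr0 !add0r => /eqP.
rewrite !mulf_eq0 bilC (negbTE buv) orbF => /orP [] /eqP k0.
- by left; move: z0; rewrite zE k0 scale0r addr0 scaler_eq0 => /norP [k1_0 _];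
    rewrite vline_scale.
- by right; move: z0; rewrite zE k0 scale0r add0r scaler_eq0 => /norP [k2_0 _];
    rewrite vline_scale.
Qed.

Lemma typeU_plane (u w : Oct F) (c : F) :
  u != 0 -> re u = 0 -> nrm u = 0 -> re w = 0 -> nrm w != 0 -> bil u w = 0 ->
  mul u w = c *: u -> typeU a b g <<[:: u; w]>>%VS.
Proof.
move=> u0 ru nu rw nw buw uw.
have w0 : w != 0 by apply: contraNneq nw => ->; rewrite nrm0.
have uw_line : u \notin <[w]>%VS.
  apply/vlineP => -[k uk]; move/eqP: (congr1 nrm uk); rewrite nrmZ nu eq_sym.
  rewrite mulf_eq0 (negbTE nw) orbF expf_eq0 /= => k0.
  by move: u0; rewrite uk (eqP k0) scale0r eqxx.
have [uU wU] := span2_mem u w.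
split; [exact: dim_span2 | exact: sub_im_span2 |].
exists u; split; rewrite -?memvE //; first exact: nil_line_iso.
- move=> L /nil_lineP [z [z0 -> nz]]; rewrite -memvE => /span2P [k1 [k2 zE]].
  move: nz; rewrite zE nrmD !nrmZ nu bilZr bilC bilZr bilC buw !mulr0 add0r addr0.
  move/eqP; rewrite mulf_eq0 (negbTE nw) orbF expf_eq0 /= => /eqP k0.
  by move: z0; rewrite zE k0 scale0r addr0 scaler_eq0 => /norP [k1_0 _]; rewrite vline_scale.
- move=> v /span2P [k1 [k2 ->]].
  rewrite omulDr !omulZr omul_iso_sq // uw scaler0 add0r scalerA.
  by rewrite memvZ ?memv_line.
Qed.

Section HyperbolicPair.
Variables x y : Oct F.
Hypothesis hxy : hyperbolic_pair x y.
Let rx : re x = 0. Proof. by case: hxy. Qed.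
Let ry : re y = 0. Proof. by case: hxy. Qed.
Let nx : nrm x = 0. Proof. by case: hxy. Qed.
Let ny : nrm y = 0. Proof. by case: hxy. Qed.
Let bxy : bil x y != 0. Proof. by case: hxy. Qed.
Local Notation be := (bil x y).

Lemma anticomm_xy : mul x y + mul y x = - be *: o1.
Proof. by rewrite omul_anticomm rx ry mulr0 !scale0r !add0r scaleNr. Qed.

Lemma re_xy : re (mul x y) = - be / 2.
Proof.
apply: (mulfI h2); rewrite re_omul rx mulr0 mul0r sub0r.
by field.
Qed.

Lemma x_neq0 : x != 0.
Proof. by apply: contraNneq bxy => ->; rewrite bilC bil0r. Qed.

(* The commutator w = xy - yx = 2xy + be is imaginary and anisotropic, and
   x w = be x: together with x it spans a plane of type U. *)
Definition comm_xy : Oct F := mul x y - mul y x.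

Lemma comm_xyE : comm_xy = 2 *: mul x y + be *: o1.
Proof.
rewrite /comm_xy -[mul y x](addKr (mul x y)) anticomm_xy scaleNr opprD opprK.
by rewrite addrA opprK scaler_nat mulr2n.
Qed.

Lemma typeU_x_comm : typeU a b g <<[:: x; comm_xy]>>%VS.
Proof.
apply: (typeU_plane (c := be)) => //; rewrite ?x_neq0 // comm_xyE.
- by rewrite reD !reZ re_xy re1; field.
- rewrite nrmD !nrmZ nrm_omul nx mul0r mulr0 add0r nrm1 mulr1.
  rewrite bilZr (bilC _ o1) bilZr (bilC o1) bil1r re_xy.
  have -> : be ^+ 2 + be * (2 * (2 * (- be / 2))) = - be ^+ 2 by field.
  by rewrite oppr_eq0 expf_neq0.
- by rewrite bilDr !bilZr bil_omulr nx bil1r rx !mul0r !mulr0 addr0.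
- by rewrite omulDr !omulZr omul_iso_left // omul1r scaler0 add0r.
Qed.

Definition S4 : {vspace Oct F} := <<[:: y; x; o1; mul x y]>>%VS.

Lemma dim_S4 : \dim S4 = 4%N.
Proof.
have notin (f : Oct F -> F) v s : (forall p q, f (p + q) = f p + f q) ->
    (forall k p, f (k *: p) = k * f p) -> {in s, forall u, f u = 0} -> f v != 0 ->
    v \notin <<s>>%VS.
  by move=> fD fZ fs; apply: contraNN => /(span_form_vanish fD fZ fs) ->.
apply/eqP; rewrite -/(free _) 3!free_cons seq1_free; apply/and4P; split.
- apply: (notin (bil x)) => [p q|k p|u|] //; rewrite ?bilDr ?bilZr //.
  by rewrite !inE => /or3P [] /eqP ->; rewrite ?bil_self ?bil1r ?bil_omulr ?nx ?rx ?mulr0 ?mul0r.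
- apply: (notin (bil y)) => [p q|k p|u|]; rewrite ?bilDr ?bilZr ?(bilC y x) //.
  by rewrite !inE => /orP [] /eqP ->; rewrite ?bil1r ?(bilC y) ?bil_omull ?ny ?ry ?rx ?mulr0 ?mul0r.
- apply: (notin (fun r => bil y (mul x r))) => [p q|k p|u|].
  + by rewrite omulDr bilDr.
  + by rewrite omulZr bilZr.
  + by rewrite !inE => /eqP ->; rewrite omul_iso_left // bil0r.
  + by rewrite omul1r bilC.
- apply: contra_neq (_ : re (mul x y) != 0) => [->|]; first exact: re0.
  by rewrite re_xy mulf_neq0 ?oppr_eq0 ?invr_eq0.
Qed.

Lemma S4_mul_y (r : Oct F) : r \in S4 -> mul y r \in S4.
Proof.
have yx : mul y x = - be *: o1 - mul x y by rewrite -anticomm_xy addrC addKr.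
have yxy : mul y (mul x y) = - be *: y.
  rewrite -[mul x y](addrK (mul y x)) anticomm_xy omulDr omulZr omul1r.
  by rewrite omulNr omul_iso_left // oppr0 addr0.
apply: (@span_map_sub _ _ (mul y)) => [p q|k p|u]; rewrite ?omulDr ?omulZr //.
rewrite !inE => /or4P [] /eqP ->; rewrite ?omul_iso_sq ?mem0v // ?omul1r ?yx ?yxy.
- by rewrite memvB ?memvZ ?memv_span ?inE ?eqxx ?orbT.
- by rewrite memv_span ?inE ?eqxx.
- by rewrite memvZ ?memv_span ?inE ?eqxx.
Qed.

(* Were S stable under left multiplication by x as well, the identity
   x(yr) + y(xr) = -be r would force S to be the whole 8-dimensional algebra. *)
Lemma S4_not_mul_x : exists q, mul x q \notin S4.
Proof.
apply: NNPP => hq.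
have xS q : mul x q \in S4 by apply/negPn/negP => nq; apply: hq; exists q.
have full : (fullv <= S4)%VS.
  apply/subvP => r _; rewrite -[r](scalerK (_ : - be != 0)) ?oppr_eq0 //.
  have -> : - be *: r = mul x (mul y r) + mul y (mul x r).
    by rewrite omul_alt_lin anticomm_xy omulZl omul1l.
  by rewrite memvZ // memvD ?xS ?S4_mul_y.
by move: (dimvS full); rewrite dimvf dim_S4.
Qed.

(* A second hyperbolic partner y' of x with x y' = x y, differing from y by a
   vector outside S: take y' = y + x q', where q' corrects q modulo 1 and y. *)
Lemma second_partner : exists y',
  [/\ hyperbolic_pair x y', mul x y' = mul x y & y' - y \notin S4].
Proof.
have [q xq] := S4_not_mul_x.
pose k1 := 2 * re (mul x q) / be.
pose k0 := bil y (mul x q) / be.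
pose z := mul x (q + (k1 *: y - k0 *: o1)).
have zE : z = mul x q + (k1 *: mul x y - k0 *: x).
  by rewrite /z !omulDr omulNr !omulZr omul1r.
have yS : y \in S4 by rewrite memv_span ?inE ?eqxx.
have xS : x \in S4 by rewrite memv_span ?inE ?eqxx ?orbT.
have xyS : mul x y \in S4 by rewrite memv_span ?inE ?eqxx ?orbT.
exists (y + z); split; first split.
- exact: rx.
- by rewrite reD zE !reD reN !reZ rx re_xy ry /k1; field; rewrite h2 bxy.
- exact: nx.
- have byz : bil y z = 0.
    rewrite zE !bilDr bilNr !bilZr (bilC y x) (bilC y (mul x y)) bil_omull ny /k0.
    by field; rewrite bxy.
  by rewrite nrmD ny byz /z nrm_omul nx mul0r !addr0.
- by rewrite bilDr /z bil_omulr nx mul0r addr0.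
- by rewrite omulDr /z omul_iso_left // addr0.
- rewrite addrC addKr; apply: contra xq => zS.
  have -> : mul x q = z - (k1 *: mul x y - k0 *: x) by rewrite zE addrK.
  exact: memvB zS (memvB (memvZ _ xyS) (memvZ _ xS)).
Qed.

Lemma subalg4_eq_S4 (H : {vspace Oct F}) :
  \dim H = 4%N -> o1 \in H -> (forall p q, p \in H -> q \in H -> mul p q \in H) ->
  x \in H -> y \in H -> H = S4.
Proof.
move=> dH oH mH xH yH; apply/eqP; rewrite eq_sym eqEdim dH dim_S4 leqnn andbT.
by apply/span_subvP => r; rewrite !inE => /or4P [] /eqP ->; rewrite ?mH.
Qed.

(* If im(H) contains x and some y0 with x y0 = x y, it contains the commutator
   plane: comm_xy = 2 x y0 + be lies in H and is imaginary. *)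
Lemma x_comm_sub_im (H B : {vspace Oct F}) (y0 : Oct F) :
  o1 \in H -> (forall p q, p \in H -> q \in H -> mul p q \in H) -> is_im_of H B ->
  x \in B -> y0 \in B -> mul x y0 = mul x y -> (<<[:: x; comm_xy]>> <= B)%VS.
Proof.
move=> oH mH imB xB y0B xy0; apply: (span2_sub xB); apply/imB; split.
- have [[xH _] [y0H _]] := (proj1 (imB x) xB, proj1 (imB y0) y0B).
  by rewrite comm_xyE -xy0 memvD ?memvZ ?mH.
- by apply/inImE; rewrite comm_xyE reD !reZ re_xy re1; field.
Qed.

End HyperbolicPair.

Definition design_obstruction (frakB : {vspace Oct F} -> Prop) : Prop :=
  (exists U, typeM a b g U /\ forall B, frakB B -> ~ (U <= B)%VS) \/
  (exists U, typeU a b g U /\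
     exists B1 B2, [/\ frakB B1, frakB B2, B1 != B2, (U <= B1)%VS & (U <= B2)%VS]).

Lemma obstruction_not_design (frakB : {vspace Oct F} -> Prop) :
  design_obstruction frakB -> ~ design_2_7_3_1 frakB.
Proof.
move=> [[U [[dU sU _] noB]] | [U [[dU sU _] [B1 [B2 [iB1 iB2 nB sB1 sB2]]]]]] [_ design].
- by have [B [iB sB _]] := design U dU sU; exact: noB B iB sB.
- have [B [_ _ uniqB]] := design U dU sU.
  by move/eqP: nB; apply; rewrite (uniqB _ iB1 sB1) (uniqB _ iB2 sB2).
Qed.

(* Given a hyperbolic pair (x, y) and the second partner
   y' of second_partner, the planes <x, y> and <x, y'> are of type M.  If both
   lie in members im(H1), im(H2) of B, then H1 = H2 would contain y' - y, which
   is not in the span S of 1, x, y, xy = H1; so im(H1) != im(H2), and both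
   contain the type-U plane <x, xy - yx>. *)
Lemma hyperbolic_obstruction (frakH : {vspace Oct F} -> Prop)
    (hH : forall H, frakH H -> assoc_subalg4 a b g H) (x y : Oct F) :
  hyperbolic_pair x y -> design_obstruction (inB frakH).
Proof.
move=> hxy; have [y' [hxy' xy' y'y]] := second_partner hxy.
have missed y0 : hyperbolic_pair x y0 ->
    ~ (exists2 B, inB frakH B & (<<[:: x; y0]>> <= B)%VS) -> design_obstruction (inB frakH).
  move=> h0 nB; left; exists <<[:: x; y0]>>%VS; split; first exact: typeM_hyperbolic.
  by move=> B iB sB; apply: nB; exists B.
have [[B1 iB1 sB1] | ] := classic (exists2 B, inB frakH B & (<<[:: x; y]>> <= B)%VS);
  last exact: missed.
have [[B2 iB2 sB2] | ] := classic (exists2 B, inB frakH B & (<<[:: x; y']>> <= B)%VS);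
  last exact: missed.
have [[H1 fH1 imH1] [H2 fH2 imH2]] := (iB1, iB2).
have [[dH1 oH1 mH1 _] [_ oH2 mH2 _]] := (hH H1 fH1, hH H2 fH2).
have [[xB1 yB1] [xB2 y'B2]] := (span2_mem x y, span2_mem x y').
move/subvP in sB1; move/subvP in sB2.
right; exists <<[:: x; comm_xy x y]>>%VS; split; first exact: typeU_x_comm.
exists B1, B2; split; [exact: iB1 | exact: iB2 | | |].
- apply/eqP => eB; move: sB2; rewrite -eB => sB2.
  have inH1 v : v \in B1 -> v \in H1 by move=> /imH1 [].
  have eS := subalg4_eq_S4 hxy dH1 oH1 mH1 (inH1 _ (sB1 _ xB1)) (inH1 _ (sB1 _ yB1)).
  apply: (negP y'y); rewrite -eS.
  by apply: memvB; apply: inH1; [apply: sB2 | apply: sB1].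
- by apply: (x_comm_sub_im hxy oH1 mH1 imH1 (y0 := y) _ _ erefl); apply: sB1.
- by apply: (x_comm_sub_im hxy oH2 mH2 imH2 (y0 := y') _ _ xy'); apply: sB2.
Qed.

End Octonions.

Theorem mainTheorem13 (F : fieldType) (a b g : F)
  (ha : a != 0) (hb : b != 0) (hg : g != 0) (hchar : (2 : F) != 0)
  (split : exists x y : Oct F, [/\ x != 0, y != 0 & omul a b g x y = 0])
  (frakH : {vspace Oct F} -> Prop)
  (hH : forall H, frakH H -> assoc_subalg4 a b g H) :
  ((exists U, typeM a b g U /\ forall B, inB frakH B -> ~ (U <= B)%VS) \/
   (exists U, typeU a b g U /\
      exists B1 B2, [/\ inB frakH B1, inB frakH B2, B1 != B2,
                       (U <= B1)%VS & (U <= B2)%VS])) /\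
  ~ design_2_7_3_1 (inB frakH).
Proof.
have [x [y hxy]] := exists_hyperbolic_pair ha hb hg hchar split.
have obstruction := hyperbolic_obstruction hchar hH hxy.
split; first exact: obstruction.
exact: obstruction_not_design obstruction.
Qed.
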